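(* Let $d\ge1$ and let $X\cong\mathbb{P}^d$ be the projective space of effective divisors of degree $d$ on $\mathbb{P}^1$, with the natural action of $G=PGL(2,\mathbb{C})$. For any two nonempty projective linear subspaces $V,W\subseteq X$ there exists $g\in G$ such that $V$ and $gW$ meet properly, i.e. $\dim(V\cap gW)=\max\{-1,\dim V+\dim W-d\}$.
   Context: Dimension $-1$ means empty intersection. *)

From HB Require Import structures.
From mathcomp Require Import all_boot all_order all_algebra.
From mathcomp Require Import Rstruct complex.
Set Implicit Arguments. Unset Strict Implicit. Unset Printing Implicit Defensive.
Import Order.TTheory GRing.Theory Num.Theory.
Local Open Scope ring_scope.

Definition CC : closedFieldType := (Rdefinitions.R)[i].

(* A binary form f(x,y) = sum_{i<=d} a_i x^i y^(d-i) of degree d over CC is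
   encoded by its coefficient row vector a : 'rV[CC]_(d.+1).
   X = P^d = P(binary forms of degree d) = effective divisors of degree d on P^1.
   A projective linear subspace of X is P(U) for a vector subspace U of
   'rV_(d.+1); U is represented as the row space of a matrix (mxalgebra). *)

(* Matrix (acting on row vectors) of the substitution
   f(x,y) |-> f(g00 x + g01 y, g10 x + g11 y), for g : 'M_2 invertible.
   Row i = coefficients of (g00 t + g01)^i (g10 t + g11)^(d-i), the
   dehomogenisation (y = 1, x = t) of the image of x^i y^(d-i). *)
Definition form_act (d : nat) (g : 'M[CC]_2) : 'M[CC]_(d.+1) :=
  \matrix_(i < d.+1, j < d.+1)
    (((g 0 0 *: 'X + (g 0 1)%:P) ^+ i * (g 1 0 *: 'X + (g 1 1)%:P) ^+ (d - i))`_j).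

(* Projective dimension of the projective subspace P(row space of A);
   -1 means empty. *)
Definition pdim (m n : nat) (A : 'M[CC]_(m, n)) : int := (\rank A)%:Z - 1.

From HB Require Import structures.
From mathcomp Require Import all_boot all_order all_algebra.
From mathcomp Require Import Rstruct complex.
From mathcomp Require Import perm ring zify.
Import Order.TTheory GRing.Theory Num.Theory.
Local Open Scope ring_scope.
Set Implicit Arguments. Unset Strict Implicit. Unset Printing Implicit Defensive.

(* It suffices to find g such that rank (V + gW) = min (rank V + rank W, d + 1),
   and, shrinking W, to make [V; gW] of full row rank when rank V + rank W <= d + 1.
   Each genericity step is one argument: the relevant minor, as a polynomial in a
   parameter u, is invertible at u = 0, hence at some u != 0.  For the shear
   x |-> x + y/u the value at 0 is the binomial matrix (C(f i, j)), invertible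
   because the polynomials binom(X, j) form a basis; for the dilation x |-> x/u it
   is block triangular. *)

Section MatrixFacts.
Variable F : fieldType.

Lemma row_free_mulmx_unit m n (A : 'M[F]_(m, n)) (B : 'M[F]_(n, m)) :
  A *m B \in unitmx -> row_free A.
Proof.
move=> uAB; rewrite /row_free eqn_leq rank_leq_row /=.
by rewrite -{1}(mxrank_unit uAB) mxrankM_maxl.
Qed.

Lemma unitmx_diag n (x : 'rV[F]_n) : (forall i, x 0 i != 0) -> diag_mx x \in unitmx.
Proof.
move=> x_neq0; rewrite unitmxE unitfE det_diag prodf_seq_neq0.
by apply/allP => i _; exact: x_neq0.
Qed.

Lemma unitmx_ublock m1 m2 (A : 'M[F]_m1) (B : 'M[F]_(m1, m2)) (D : 'M[F]_m2) :
  A \in unitmx -> D \in unitmx -> block_mx A B 0 D \in unitmx.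
Proof. by rewrite !unitmxE det_ublock unitrM => -> ->. Qed.

Lemma row_free_unit_colsub a n (V : 'M[F]_(a, n)) : row_free V ->
  exists f : {ffun 'I_a -> 'I_n}, colsub f V \in unitmx.
Proof.
move=> fV; have rfV : row_full V^T by rewrite /row_full mxrank_tr.
by exists (fullrankfun rfV); rewrite -unitmx_tr trmx_mxsub fullrowsub_unit.
Qed.

Lemma unitmx_colsub_exchange a n (V : 'M[F]_(a, n)) (f : 'I_a -> 'I_n) i l :
  colsub f V = 1%:M -> V i l != 0 ->
  colsub (fun k => if k == i then l else f k) V \in unitmx.
Proof.
move=> Vf Vil; rewrite unitmxE unitfE; apply/negP => /det0P [x x_neq0 x_ker].
have Vf_delta r k : V r (f k) = (r == k)%:R.
  by have := congr1 (fun M : 'M[F]_a => M r k) Vf; rewrite !mxE.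
have x_ker_at k : \sum_r x 0 r * V r (if k == i then l else f k) = 0.
  have := congr1 (fun M : 'M[F]_(1, a) => M 0 k) x_ker; rewrite !mxE.
  by under eq_bigr do rewrite mxE.
have x_off k : k != i -> x 0 k = 0.
  move=> /negPf ki; have := x_ker_at k; rewrite ki.
  under eq_bigr do rewrite Vf_delta.
  by rewrite (bigD1 k) //= eqxx mulr1 big1 ?addr0 // => r /negPf ->; rewrite mulr0.
have x_i : x 0 i = 0.
  have := x_ker_at i; rewrite eqxx (bigD1 i) //= big1 ?addr0 => [|r ri]; last first.
    by rewrite x_off ?mul0r.
  by move/eqP; rewrite mulf_eq0 (negPf Vil) orbF => /eqP.
move/negP: x_neq0; apply; apply/eqP/matrixP => r k; rewrite (ord1 r) !mxE.
by case: (eqVneq k i) => [->|/x_off].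
Qed.

(* A column selection maximizing the sum of the selected indices is a set of
   pivots of a "reversed" row echelon form: beyond its pivot every reduced row
   vanishes, since otherwise exchanging would increase the sum. *)
Lemma row_free_pivots a n (V : 'M[F]_(a, n)) : row_free V ->
  exists2 f : {ffun 'I_a -> 'I_n}, colsub f V \in unitmx &
    let V' := invmx (colsub f V) *m V in
    colsub f V' = 1%:M /\ forall i (l : 'I_n), (f i < l)%N -> V' i l = 0.
Proof.
move=> fV; have [f0 uf0] := row_free_unit_colsub fV.
have [f uf f_max] := @arg_maxnP _ f0 (fun f => colsub f V \in unitmx)
  (fun f : {ffun 'I_a -> 'I_n} => \sum_k (f k : nat)) uf0.
exists f => //=; set V' := invmx (colsub f V) *m V.
have V'f : colsub f V' = 1%:M by rewrite /V' -mulmx_colsub mulVmx.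
split=> // i l fil; apply/eqP; apply: contraT => V'il.
set f' := [ffun k => if k == i then l else f k].
have uf' : colsub f' V \in unitmx.
  have -> : colsub f' V = colsub f V *m colsub f' V' by rewrite mulmx_colsub mulKVmx.
  rewrite unitmx_mul uf.
  have -> : colsub f' V' = colsub (fun k => if k == i then l else f k) V'.
    by apply/matrixP => r k; rewrite !mxE ffunE.
  exact: unitmx_colsub_exchange.
have sum_split (g : {ffun 'I_a -> 'I_n}) :
  \sum_k (g k : nat) = (g i + \sum_(k | k != i) (g k : nat))%N by rewrite (bigD1 i).
have := f_max f' uf'; rewrite !sum_split ffunE eqxx.
have -> : \sum_(k | k != i) (f' k : nat) = \sum_(k | k != i) (f k : nat).
  by apply: eq_bigr => k /negPf ki; rewrite ffunE ki.
by rewrite /geq /= leq_add2r leqNgt fil.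
Qed.

Lemma unitmx_colsub_perm m (s : 'S_m) (Y : 'M[F]_m) :
  (colsub s Y \in unitmx) = (Y \in unitmx).
Proof. by rewrite -col_permEsub col_permE unitmx_mul unitmx_perm andbT. Qed.

Lemma unitmx_colsub_rev_ord m (Y : 'M[F]_m) :
  (colsub (@rev_ord m) Y \in unitmx) = (Y \in unitmx).
Proof.
have -> : colsub (@rev_ord m) Y = colsub (perm (@rev_ord_inj m)) Y.
  by apply/matrixP => i j; rewrite !mxE permE.
exact: unitmx_colsub_perm.
Qed.

End MatrixFacts.

Lemma exprB_mul (R : comPzRingType) (c u : R) m n : c * u = 1 -> (n <= m)%N ->
  c ^+ (m - n) = c ^+ m * u ^+ n.
Proof. by move=> cu nm; rewrite -{2}(subnK nm) exprD -mulrA -exprMn cu expr1n mulr1. Qed.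

Lemma coef_XaddC_exp (R : comNzRingType) (c : R) l j :
  (('X + c%:P) ^+ l)`_j = 'C(l, j)%:R * c ^+ (l - j).
Proof.
elim: l j => [|l IHl] j.
  by rewrite expr0 coefC; case: j => [|j]; rewrite ?mulr1 ?bin0 // bin0n mul0r.
rewrite exprS mulrDl coefD coefXM coefCM.
case: j => [|j] /=; rewrite !IHl; first by rewrite !bin0 subn0 exprS !mul1r add0r.
rewrite binS natrD mulrDl addrC; congr (_ + _).
case: (ltnP j l) => jl; first by rewrite mulrCA -exprS subnSK.
by rewrite bin_small ?ltnS // !mul0r mulr0.
Qed.



Section PolynomialMatrices.
Variable R : numFieldType.

Lemma exists_nonzero_nonroot (q : {poly R}) : q != 0 ->
  exists2 u : R, u != 0 & ~~ root q u.
Proof.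
move=> q_neq0; set rs := [seq i.+1%:R : R | i <- iota 0 (size q)].
have rs_uniq : uniq rs.
  by rewrite map_inj_uniq ?iota_uniq // => i j /eqP; rewrite eqr_nat eqSS => /eqP.
have /allPn [_ /mapP [i _ ->] not_root] : ~~ all (root q) rs.
  apply: contraTN (leqnn (size q)) => /(max_poly_roots q_neq0)/(_ rs_uniq).
  by rewrite size_map size_iota ltnn.
by exists i.+1%:R; rewrite ?pnatr_eq0.
Qed.

Lemma unitmx_horner_eval_nonzero m (N : 'M[{poly R}]_m) :
  map_mx (horner_eval 0) N \in unitmx ->
  exists2 u : R, u != 0 & map_mx (horner_eval u) N \in unitmx.
Proof.
rewrite unitmxE unitfE det_map_mx => N0.
have detN_neq0 : \det N != 0 by apply: contraNneq N0 => ->; rewrite rmorph0.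
have [u u_neq0 Nu] := exists_nonzero_nonroot detN_neq0.
by exists u; rewrite // unitmxE unitfE det_map_mx.
Qed.

Definition binom_poly (j : nat) : {poly R} :=
  (j`!%:R)^-1 *: \prod_(k < j) ('X - (k : nat)%:R%:P).

Lemma fact_natr_neq0 j : (j`!%:R : R) != 0.
Proof. by rewrite pnatr_eq0 -lt0n fact_gt0. Qed.

Lemma binom_polyE e j : (binom_poly j).[e%:R] = 'C(e, j)%:R.
Proof.
rewrite /binom_poly hornerZ horner_prod.
have -> : \prod_(k < j) ('X - (k : nat)%:R%:P).[e%:R] = (e ^_ j)%:R :> R.
  rewrite ffact_prod natr_prod; case: (leqP j e) => je.
    by apply: eq_bigr => k _; rewrite hornerXsubC natrB // ltnW // (leq_trans (ltn_ord k)).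
  rewrite (bigD1 (Ordinal je)) //= hornerXsubC subrr mul0r.
  by rewrite (bigD1 (Ordinal je)) //= subnn mul0r.
by rewrite -bin_ffact natrM mulrC mulrK // unitfE fact_natr_neq0.
Qed.

Lemma size_binom_poly j : size (binom_poly j) = j.+1.
Proof.
rewrite /binom_poly size_scale ?invr_eq0 ?fact_natr_neq0 //.
by rewrite size_prod_XsubC [index_enum _]unlock -enumT size_enum_ord.
Qed.

Lemma lead_coef_binom_poly j : lead_coef (binom_poly j) = (j`!%:R)^-1.
Proof. by rewrite /binom_poly lead_coefZ (monicP (monic_prod_XsubC _ _ _)) mulr1. Qed.

Lemma binom_poly_free m (w : nat -> R) :
  \sum_(j < m) w j *: binom_poly j = 0 -> forall j, (j < m)%N -> w j = 0.
Proof.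
elim: m => [|m IHm] w0 j // jm.
have wm : w m = 0.
  have := congr1 (fun p : {poly R} => p`_m) w0; rewrite coef0 coef_sum big_ord_recr /=.
  rewrite big1 ?add0r => [|k _]; last by rewrite coefZ nth_default ?mulr0 // size_binom_poly.
  have := lead_coef_binom_poly m; rewrite /lead_coef size_binom_poly /= => lc.
  rewrite coefZ lc => /eqP.
  by rewrite mulf_eq0 invr_eq0 (negPf (fact_natr_neq0 m)) orbF => /eqP.
move: w0; rewrite big_ord_recr /= wm scale0r addr0 => /IHm w_lt.
case: (ltnP j m) => [/w_lt // | mj].
by have -> : j = m by lia.
Qed.

(* The transposed matrix kills v iff the polynomial sum_j v_j binom(X, j), of
   size at most a, vanishes at the a distinct points f i. *)
Lemma unitmx_binomial a (f : 'I_a -> nat) : injective f ->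
  \matrix_(i < a, j < a) ('C(f i, j)%:R : R) \in unitmx.
Proof.
move=> f_inj; rewrite -unitmx_tr unitmxE unitfE; apply/det0P => -[v v_neq0 v_ker].
set p := \sum_(j < a) v 0 j *: binom_poly j.
have p_root i : root p (f i)%:R.
  apply/eqP; have := congr1 (fun M : 'M[R]_(1, a) => M 0 i) v_ker; rewrite !mxE => <-.
  rewrite /p horner_sum; apply: eq_bigr => j _.
  by rewrite hornerZ binom_polyE !mxE.
have p0 : p = 0.
  apply/eqP; apply: contraT => p_neq0.
  set rs := [seq (f i)%:R : R | i <- enum 'I_a].
  have rs_uniq : uniq rs.
    by rewrite map_inj_uniq ?enum_uniq // => i j /eqP; rewrite eqr_nat => /eqP /f_inj.
  have p_roots : all (root p) rs by apply/allP => _ /mapP [i _ ->].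
  have size_p : (size p <= a)%N.
    rewrite (leq_trans (size_sum _ _ _)) //; apply/bigmax_leqP => j _.
    by rewrite (leq_trans (size_scale_leq _ _)) // size_binom_poly.
  have := max_poly_roots p_neq0 p_roots rs_uniq.
  by rewrite size_map size_enum_ord ltnNge size_p.
set w := fun j : nat => \sum_(k < a | (k : nat) == j) v 0 k.
have wE (k : 'I_a) : w k = v 0 k by rewrite /w (big_pred1 k) // => k'; rewrite /= val_eqE.
have w0 : \sum_(j < a) w j *: binom_poly j = 0.
  by rewrite -[RHS]p0; apply: eq_bigr => j _; rewrite wE.
move/negP: v_neq0; apply; apply/eqP/matrixP => i j.
by rewrite (ord1 i) !mxE -wE (binom_poly_free w0).
Qed.

End PolynomialMatrices.

Section TwoByTwo.
Variable R : comUnitRingType.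

Definition mx2 (a b c e : R) : 'M[R]_2 :=
  \matrix_(i < 2, j < 2)
    if i == 0 then (if j == 0 then a else b) else (if j == 0 then c else e).

Lemma mx2M a b c e a' b' c' e' :
  mx2 a b c e * mx2 a' b' c' e' =
  mx2 (a * a' + b * c') (a * b' + b * e') (c * a' + e * c') (c * b' + e * e').
Proof.
apply/matrixP => i j; rewrite !mxE !big_ord_recl big_ord0 addr0 !mxE.
by case: i => [[|[|]]] //; case: j => [[|[|]]].
Qed.

Lemma mx2_1 : mx2 1 0 0 1 = 1.
Proof. by apply/matrixP => i j; rewrite !mxE; case: i => [[|[|]]] //; case: j => [[|[|]]]. Qed.

Lemma mx2_unit a b c e a' b' c' e' :
  mx2 a b c e * mx2 a' b' c' e' = 1 -> mx2 a b c e \in unitmx.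
Proof. by rewrite -mulmxE => /mulmx1_unit []. Qed.

Lemma mulmx2E (g h : 'M[R]_2) i j : (g * h) i j = g i 0 * h 0 j + g i 1 * h 1 j.
Proof.
rewrite -mulmxE mxE !big_ord_recl big_ord0 addr0.
by have -> : lift ord0 ord0 = 1 :> 'I_2 by apply: val_inj.
Qed.

End TwoByTwo.

(* [lin_form g 0] and [lin_form g 1] are the images of x and y under g, with y = 1. *)
Definition lin_form (g : 'M[CC]_2) (r : 'I_2) : {poly CC} := g r 0 *: 'X + (g r 1)%:P.

(* Substituting g in a form of degree m, given by its dehomogenisation p. *)
Definition hsubst (m : nat) (g : 'M[CC]_2) (p : {poly CC}) : {poly CC} :=
  \sum_(j < m.+1) p`_j *: (lin_form g 0 ^+ j * lin_form g 1 ^+ (m - j)).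

Lemma form_actE d (g : 'M[CC]_2) : form_act d g =
  \matrix_(i < d.+1, j < d.+1) (lin_form g 0 ^+ i * lin_form g 1 ^+ (d - i))`_j.
Proof. by []. Qed.

Lemma hsubstD m g (p q : {poly CC}) : hsubst m g (p + q) = hsubst m g p + hsubst m g q.
Proof. by rewrite /hsubst -big_split; apply: eq_bigr => j _; rewrite coefD scalerDl. Qed.

Lemma hsubstZ m g c (p : {poly CC}) : hsubst m g (c *: p) = c *: hsubst m g p.
Proof. by rewrite /hsubst scaler_sumr; apply: eq_bigr => j _; rewrite coefZ scalerA. Qed.

Lemma hsubstS m g (p : {poly CC}) : (size p <= m.+1)%N ->
  hsubst m.+1 g p = lin_form g 1 * hsubst m g p.
Proof.
move=> sp; rewrite /hsubst big_ord_recr /= nth_default // scale0r addr0 mulr_sumr.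
apply: eq_bigr => j _ /=; rewrite -scalerAr subSn -1?ltnS // exprS.
by rewrite mulrCA.
Qed.

Lemma hsubstXM m g (p : {poly CC}) : hsubst m.+1 g ('X * p) = lin_form g 0 * hsubst m g p.
Proof.
rewrite /hsubst big_ord_recl /= coefXM /= scale0r add0r mulr_sumr.
apply: eq_bigr => j _; rewrite coefXM /bump /= -scalerAr add1n subSS exprS.
by rewrite mulrA.
Qed.

Lemma hsubst_lin_formM m (g h : 'M[CC]_2) r (p : {poly CC}) : (size p <= m.+1)%N ->
  hsubst m.+1 h (lin_form g r * p) = lin_form (g * h) r * hsubst m h p.
Proof.
move=> sp; have -> : lin_form g r * p = g r 0 *: ('X * p) + g r 1 *: p.
  by rewrite /lin_form mulrDl -scalerAl mul_polyC.
rewrite hsubstD !hsubstZ hsubstXM hsubstS // /lin_form !mulmx2E.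
by rewrite -!mul_polyC !polyCD !polyCM; ring.
Qed.

Lemma size_lin_form_prod (g : 'M[CC]_2) (i j : nat) :
  leq (size (lin_form g 0 ^+ i * lin_form g 1 ^+ j)) (i + j).+1.
Proof.
have size_lin_form r : (size (lin_form g r) <= 2)%N.
  rewrite (leq_trans (size_polyD _ _)) // geq_max (leq_trans (size_polyC_leq1 _)) //.
  by rewrite (leq_trans (size_scale_leq _ _)) ?size_polyX.
have sizeM r (q : {poly CC}) k : (size q <= k.+1)%N -> leq (size (lin_form g r * q)) k.+2.
  move=> sq; rewrite (leq_trans (size_polyMleq _ _)) //.
  by have := size_lin_form r; lia.
elim: i => [|i IHi]; last by rewrite exprS -mulrA sizeM.
rewrite expr0 mul1r add0n; elim: j => [|j IHj]; first by rewrite expr0 size_poly1.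
by rewrite exprS sizeM.
Qed.

Lemma hsubst_lin_form_prod (g h : 'M[CC]_2) i j :
  hsubst (i + j) h (lin_form g 0 ^+ i * lin_form g 1 ^+ j) =
  lin_form (g * h) 0 ^+ i * lin_form (g * h) 1 ^+ j.
Proof.
elim: i => [|i IHi]; last first.
  by rewrite !exprS -!mulrA addSn hsubst_lin_formM ?IHi ?size_lin_form_prod.
rewrite !expr0 !mul1r add0n; elim: j => [|j IHj].
  by rewrite /hsubst big_ord1 !expr0 coefC eqxx scale1r mulr1.
rewrite !exprS hsubst_lin_formM ?IHj //.
by have := size_lin_form_prod g 0 j; rewrite expr0 mul1r.
Qed.

Lemma form_actM d (g h : 'M[CC]_2) : form_act d (g * h) = form_act d g *m form_act d h.
Proof.
apply/matrixP => i k; rewrite !form_actE !mxE.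
have := hsubst_lin_form_prod g h i (d - i); rewrite subnKC ?(ltnSE (ltn_ord i)) // => <-.
by rewrite /hsubst coef_sum; apply: eq_bigr => j _; rewrite coefZ !mxE.
Qed.

Lemma form_act1 d : form_act d 1 = 1%:M.
Proof.
apply/matrixP => i j.
rewrite !mxE /lin_form /= scale1r scale0r add0r addr0 polyC1 expr1n mulr1.
by rewrite coefXn eq_sym.
Qed.

Lemma form_act_unit d g : g \in unitmx -> form_act d g \in unitmx.
Proof.
move=> ug; have := form_actM d g (invmx g); rewrite -mulmxE mulmxV // form_act1.
by move/esym/mulmx1_unit => [].
Qed.

Definition shear (c : CC) := mx2 1 c 0 1.
Definition flip : 'M[CC]_2 := mx2 0 1 1 0.
Definition dilation (s : CC) := mx2 s 0 0 1.

Lemma shear_unit c : shear c \in unitmx.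
Proof. by apply: (@mx2_unit _ _ _ _ _ 1 (- c) 0 1); rewrite mx2M -mx2_1; congr mx2; ring. Qed.

Lemma flip_unit : flip \in unitmx.
Proof. by apply: (@mx2_unit _ _ _ _ _ 0 1 1 0); rewrite mx2M -mx2_1; congr mx2; ring. Qed.

Lemma dilation_unit s : s != 0 -> dilation s \in unitmx.
Proof.
move=> s_neq0; apply: (@mx2_unit _ _ _ _ _ s^-1 0 0 1); rewrite mx2M -mx2_1.
by congr mx2; rewrite ?mulfV //; ring.
Qed.

Lemma shearNK c : shear (- c) * shear c = 1.
Proof. by rewrite mx2M -mx2_1; congr mx2; ring. Qed.

Lemma form_act_shear d c (i j : 'I_d.+1) :
  form_act d (shear c) i j = 'C(i, j)%:R * c ^+ (i - j).
Proof.
rewrite form_actE mxE /lin_form !mxE /= scale1r scale0r add0r polyC1 expr1n mulr1.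
exact: coef_XaddC_exp.
Qed.

Lemma form_act_flip d m (X : 'M[CC]_(m, d.+1)) :
  X *m form_act d flip = colsub (@rev_ord _) X.
Proof.
have flipE (i j : 'I_d.+1) : form_act d flip i j = (j == rev_ord i)%:R.
  rewrite form_actE mxE /lin_form !mxE /= scale1r scale0r add0r addr0 polyC1 expr1n.
  rewrite mul1r coefXn.
  by congr (_%:R); apply/eqP/eqP => [->|/(congr1 val) //]; apply: val_inj.
apply/matrixP => r j; rewrite !mxE (bigD1 (rev_ord j)) //= big1 ?addr0 => [|l lj].
  by rewrite flipE rev_ordK eqxx mulr1.
rewrite flipE; case: eqP => [jE|]; last by rewrite mulr0.
by rewrite jE rev_ordK eqxx in lj.
Qed.

Lemma form_act_dilation d s : form_act d (dilation s) = diag_mx (\row_j s ^+ j).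
Proof.
apply/matrixP => i j.
rewrite form_actE mxE /lin_form !mxE /= scale0r add0r addr0 polyC1 expr1n mulr1.
by rewrite exprZn coefZ coefXn mulrC mulr_natl eq_sym.
Qed.

Section Shear.
Variables (d a : nat) (a_le : (a <= d.+1)%N).

(* Up to the diagonal factors of [shear_minorE], the leading minor of V after
   x |-> x + c y, as a polynomial in u = 1/c. *)
Definition shear_minor_poly (V : 'M[CC]_(a, d.+1)) (f : 'I_a -> 'I_d.+1) :
    'M[{poly CC}]_a :=
  \matrix_(i, j) \sum_(l < d.+1) (V i l * 'C(l, j)%:R) *: 'X^(f i - l).

Lemma shear_minorE (V : 'M[CC]_(a, d.+1)) (f : 'I_a -> 'I_d.+1) (c u : CC) : c * u = 1 ->
  (forall i (l : 'I_d.+1), (f i < l)%N -> V i l = 0) ->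
  colsub (widen_ord a_le) (V *m form_act d (shear c)) =
  diag_mx (\row_i c ^+ f i) *m map_mx (horner_eval u) (shear_minor_poly V f) *m
    diag_mx (\row_j u ^+ j).
Proof.
move=> cu V_pivot; apply/matrixP => i j.
rewrite mul_mx_diag mul_diag_mx !mxE /horner_eval horner_sum mulr_sumr mulr_suml.
apply: eq_bigr => l _; rewrite form_act_shear hornerZ hornerXn /=.
have [->|V_il] := eqVneq (V i l) 0; first by rewrite !mul0r mulr0 mul0r.
have l_le : (l <= f i)%N by rewrite leqNgt; apply: contra V_il => /V_pivot ->.
have [lj|jl] := ltnP l j; first by rewrite bin_small //; ring.
have c_l : c ^+ l = c ^+ f i * u ^+ (f i - l).
  by rewrite -(exprB_mul cu (leq_subr _ _)) subKn.
by rewrite (exprB_mul cu jl) c_l; ring.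
Qed.

Lemma shear_minor_poly0 (V : 'M[CC]_(a, d.+1)) (f : 'I_a -> 'I_d.+1) :
  (forall i k, V i (f k) = (i == k)%:R) ->
  (forall i (l : 'I_d.+1), (f i < l)%N -> V i l = 0) ->
  map_mx (horner_eval 0) (shear_minor_poly V f) = \matrix_(i, j) 'C(f i, j)%:R.
Proof.
move=> V_f V_pivot; apply/matrixP => i j; rewrite !mxE /horner_eval horner_sum.
rewrite (bigD1 (f i)) //= big1 ?addr0 => [|l li].
  by rewrite hornerZ hornerXn subnn expr0 mulr1 V_f eqxx mul1r.
rewrite hornerZ hornerXn; case: (ltngtP (f i) l) => fil.
- by rewrite V_pivot // !mul0r.
- by rewrite expr0n subn_eq0 leqNgt fil mulr0.
- by move: li; rewrite (val_inj fil) eqxx.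
Qed.

Lemma exists_shear_lead_minor_unit (V : 'M[CC]_(a, d.+1)) : row_free V ->
  exists c, colsub (widen_ord a_le) (V *m form_act d (shear c)) \in unitmx.
Proof.
move=> fV; have [f uf [/= V'f V'_pivot]] := row_free_pivots fV.
set V' := invmx (colsub f V) *m V in V'f V'_pivot.
have V'_f i k : V' i (f k) = (i == k)%:R.
  by have := congr1 (fun M : 'M[CC]_a => M i k) V'f; rewrite !mxE.
have f_inj : injective (fun i => f i : nat).
  move=> i k /val_inj fik; have := V'_f i k; rewrite -fik V'_f eqxx.
  by case: eqP => // _ /eqP; rewrite oner_eq0.
have [u u_neq0 uK] : exists2 u : CC,
    u != 0 & map_mx (horner_eval u) (shear_minor_poly V' f) \in unitmx.
  by apply: unitmx_horner_eval_nonzero; rewrite shear_minor_poly0 // unitmx_binomial.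
exists u^-1; have cu : u^-1 * u = 1 by rewrite mulVf.
have -> : V = colsub f V *m V' by rewrite mulKVmx.
rewrite -mulmxA -mulmx_colsub (shear_minorE cu V'_pivot) !unitmx_mul uf uK.
by rewrite !unitmx_diag // => i; rewrite mxE expf_neq0 ?invr_eq0.
Qed.

End Shear.

Definition tail_ord n b (b_le : (b <= n)%N) (k : 'I_b) : 'I_n :=
  cast_ord (subnK b_le) (rshift (n - b) k).

Section Dilation.
Variables (d a b : nat) (a_le : (a <= d.+1)%N) (b_le : (b <= d.+1)%N).
Hypothesis ab_le : (a + b <= d.+1)%N.
Implicit Types (V : 'M[CC]_(a, d.+1)) (W : 'M[CC]_(b, d.+1)).

Let ends : 'M[CC]_(d.+1, a + b) :=
  row_mx (colsub (widen_ord a_le) 1%:M) (colsub (tail_ord b_le) 1%:M).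

(* The corresponding minor of [V; W t] for t = dilation (1/u), up to
   diagonal factors; its off-diagonal blocks carry the powers of u. *)
Definition dilation_minor_poly V W : 'M[{poly CC}]_(a + b) :=
  block_mx (map_mx polyC (colsub (widen_ord a_le) V))
    (\matrix_(i, k) ((V i (tail_ord b_le k))%:P * 'X^(tail_ord b_le k - a)))
    (\matrix_(r, k) ((W r (widen_ord a_le k))%:P * 'X^(a - k)))
    (map_mx polyC (colsub (tail_ord b_le) W)).

Lemma unitmx_dilation_minor_poly0 V W :
  colsub (widen_ord a_le) V \in unitmx -> colsub (tail_ord b_le) W \in unitmx ->
  map_mx (horner_eval 0) (dilation_minor_poly V W) \in unitmx.
Proof.
move=> uV uW; rewrite map_block_mx.
have -> : map_mx (horner_eval 0)
    (\matrix_(r, k) ((W r (widen_ord a_le k))%:P * 'X^(a - k))) = 0.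
  apply/matrixP => r k; rewrite !mxE /horner_eval hornerM hornerC hornerXn expr0n.
  by rewrite subn_eq0 leqNgt ltn_ord mulr0.
have polyC0 m n (A : 'M[CC]_(m, n)) : map_mx (horner_eval 0) (map_mx polyC A) = A.
  by apply/matrixP => i j; rewrite !mxE /horner_eval hornerC.
by rewrite !polyC0 unitmx_ublock.
Qed.

Lemma dilation_minorE V W (s u : CC) : s * u = 1 ->
  col_mx V (W *m form_act d (dilation s)) *m ends =
  block_mx 1%:M 0 0 (s ^+ a)%:M *m map_mx (horner_eval u) (dilation_minor_poly V W) *m
    block_mx 1%:M 0 0 (diag_mx (\row_k s ^+ (tail_ord b_le k - a))).
Proof.
move=> su; rewrite mul_col_mx !mul_mx_row !mulmx_colsub !mulmx1 form_act_dilation.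
rewrite map_block_mx !mulmx_block !mul1mx !mul0mx !mulmx0 !mulmx1 !addr0 !add0r.
rewrite !mul_scalar_mx; congr block_mx; apply/matrixP => i j.
- by rewrite !mxE /horner_eval hornerC.
- rewrite mul_mx_diag !mxE /horner_eval hornerM hornerC hornerXn.
  by rewrite -mulrA -exprMn [u * s]mulrC su expr1n mulr1.
- rewrite mul_mx_diag !mxE /horner_eval hornerM hornerC hornerXn /=.
  rewrite -[X in s ^+ X](subKn (ltnW (ltn_ord j))) (exprB_mul su (leq_subr _ _)).
  by ring.
- rewrite mul_mx_diag -scalemxAl mul_mx_diag !mxE /horner_eval hornerC.
  have a_le_tail : (a <= tail_ord b_le j)%N by rewrite /=; lia.
  by rewrite mulrCA -exprD subnKC.
Qed.

Lemma exists_dilation_row_free V W :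
  colsub (widen_ord a_le) V \in unitmx -> colsub (tail_ord b_le) W \in unitmx ->
  exists2 s : CC, s != 0 & row_free (col_mx V (W *m form_act d (dilation s))).
Proof.
move=> uV uW.
have [u u_neq0 uN] := unitmx_horner_eval_nonzero (unitmx_dilation_minor_poly0 uV uW).
have s_neq0 : u^-1 != 0 by rewrite invr_eq0.
exists u^-1 => //; apply: (@row_free_mulmx_unit _ _ _ _ ends).
rewrite (dilation_minorE _ _ (mulVf u_neq0)) !unitmx_mul uN /= !unitmx_ublock ?unitmx1 //.
  by apply: unitmx_diag => k; rewrite mxE expf_neq0.
by rewrite unitmxE det_scalar unitfE !expf_neq0.
Qed.

End Dilation.

(* Shears (and the flip x <-> y) make the first a coordinates of V and the last
   b coordinates of W independent; a dilation then separates V from W. *)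
Lemma exists_row_free_col_mx d a b (V : 'M[CC]_(a, d.+1)) (W : 'M[CC]_(b, d.+1)) :
  row_free V -> row_free W -> (a + b <= d.+1)%N ->
  exists2 g, g \in unitmx & row_free (col_mx V (W *m form_act d g)).
Proof.
move=> fV fW ab_le.
have a_le : (a <= d.+1)%N by lia.
have b_le : (b <= d.+1)%N by lia.
have [c Vc] := exists_shear_lead_minor_unit a_le fV.
have [e We] := exists_shear_lead_minor_unit b_le fW.
have Wef : colsub (tail_ord b_le) (W *m form_act d (shear e) *m form_act d flip) \in unitmx.
  rewrite form_act_flip -colsub_comp.
  have -> : colsub (@rev_ord _ \o tail_ord b_le) (W *m form_act d (shear e)) =
            colsub (@rev_ord _) (colsub (widen_ord b_le) (W *m form_act d (shear e))).
    by rewrite -colsub_comp; apply: eq_colsub => k; apply/val_inj => /=; lia.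
  by rewrite unitmx_colsub_rev_ord.
have [s s_neq0 fVW] := exists_dilation_row_free ab_le Vc Wef.
exists (shear e * flip * dilation s * shear (- c)).
  by rewrite -!mulmxE !unitmx_mul !shear_unit flip_unit dilation_unit.
have fc : row_free (form_act d (shear c)) by rewrite row_free_unit form_act_unit ?shear_unit.
rewrite /row_free -(mxrankMfree _ fc) mul_col_mx -mulmxA -form_actM.
by rewrite -[_ * shear c]mulrA shearNK mulr1 !form_actM !mulmxA.
Qed.

Lemma exists_rank_addsmx_form_act d m n (V : 'M[CC]_(m, d.+1)) (W : 'M[CC]_(n, d.+1)) :
  exists2 g, g \in unitmx &
    \rank (V + W *m form_act d g)%MS = minn (\rank V + \rank W) d.+1.
Proof.
pose b := minn (\rank W) (d.+1 - \rank V).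
have rV_le : (\rank V <= d.+1)%N by exact: rank_leq_col.
have ab_le : (\rank V + b <= d.+1)%N by lia.
set Wb := (pid_mx b : 'M[CC]_(b, \rank W)) *m row_base W.
have fWb : row_free Wb by rewrite /row_free mxrankMfree ?row_base_free // rank_pid_mx ?geq_minl.
have [g ug fVW] := exists_row_free_col_mx (row_base_free V) fWb ab_le.
exists g => //.
have fA : row_free (form_act d g) by rewrite row_free_unit form_act_unit.
have rW : \rank (W *m form_act d g) = \rank W by rewrite mxrankMfree.
have rVWb : \rank (col_mx (row_base V) (Wb *m form_act d g)) = (\rank V + b)%N.
  by apply/eqP.
have lower : (\rank V + b <= \rank (V + W *m form_act d g))%N.
  rewrite -rVWb -(addsmxE _ _).1 mxrankS // addsmxS ?eq_row_base //.
  by rewrite submxMr // (submx_trans (submxMl _ _)) ?eq_row_base.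
have upper : (\rank (V + W *m form_act d g) <= \rank V + \rank W)%N.
  by rewrite -rW mxrank_adds_leqif.
have := rank_leq_col (V + W *m form_act d g)%MS; lia.
Qed.

Theorem proposition3p1 (d : nat) (V W : 'M[CC]_(d.+1)) :
  (1 <= d)%N ->
  (0 < \rank V)%N -> (0 < \rank W)%N ->
  exists g : 'M[CC]_2, g \in unitmx /\
    pdim (V :&: (W *m form_act d g))%MS
    = Num.max (-1) (pdim V + pdim W - d%:Z).
Proof.
move=> _ _ _; have [g ug rank_sum] := exists_rank_addsmx_form_act V W.
exists g; split=> //.
have := mxrank_sum_cap V (W *m form_act d g).
rewrite mxrankMfree ?row_free_unit ?form_act_unit // rank_sum /pdim.
lia.
Qed.
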